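(* Let $H$ be a strongly connected simple digraph, let $k$ be a positive integer, and let $T$ be a tournament that does not contain $k$ pairwise vertex-disjoint topological minor copies of $H$. Then there is a set $X$ of at most $2d_{\mathrm{pw}}\|H\|\cdot k\log k$ vertices of $T$ such that $T-X$ does not contain $H$ as a topological minor.
   Context: $\|H\|:=|V(H)|+|A(H)|$; logarithms are base 2. A tournament is a simple digraph with exactly one arc between every pair of distinct vertices. A topological minor copy of $H$ in a digraph $G$ is a subgraph $\widehat H$ of $G$ with a map sending vertices of $H$ to distinct vertices of $\widehat H$ and arcs $(u,v)$ of $H$ to directed paths from the image of $u$ to the image of $v$ that are internally vertex-disjoint, contain no image of a vertex of $H$ as an internal vertex, and together cover every arc and every non-image vertex of $\widehat H$ exactly once; $G$ contains $H$ as a topological minor if it has such a subgraph. An interval decomposition of $T$ assigns to each vertex $v$ a nonempty closed integer interval $I(v)$ such that whenever $\max I(u)<\min I(v)$ the arc between $u,v$ is $(u,v)$; its width is $\max_{\alpha\in\mathbb{Z}}|\{v:\alpha\in I(v)\}|$, and $\mathrm{pw}(T)$ is the minimum width. $d_{\mathrm{pw}}$ is a fixed constant such that every tournament not containing a simple digraph $H'$ as a topological minor has pathwidth at most $d_{\mathrm{pw}}\|H'\|$ (such a constant exists by a result of Fomin and Pilipczuk). *)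

From Stdlib Require Import Reals ZArith.
From mathcomp Require Import all_boot.
Set Implicit Arguments. Unset Strict Implicit. Unset Printing Implicit Defensive.

(* A digraph on a finite vertex type V is an arc relation a : rel V
   ((u,v) is an arc iff a u v).  Simple = no loops (no parallel arcs is
   automatic for a relation). *)
Definition simple_digraph (V : finType) (a : rel V) : Prop := irreflexive a.

Definition tournament (V : finType) (a : rel V) : Prop :=
  irreflexive a /\ forall u v : V, u != v -> a u v = ~~ a v u.

Definition strongly_connected (V : finType) (a : rel V) : Prop :=
  forall u v : V, connect a u v.

Definition dg_size (V : finType) (a : rel V) : nat :=
  #|V| + #|[set p : V * V | a p.1 p.2]|.

(* A topological minor copy of h in g: an injective vertex map phi and, for
   each arc (u,v) of h, the list P u v of internal vertices of a directed
   path of g from phi u to phi v; paths are internally vertex-disjoint and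
   contain no branch vertex phi w as an internal vertex.  (The subgraph
   \hat H is the union of the branch vertices and these paths.) *)
Definition tm_copy (VG VH : finType) (g : rel VG) (h : rel VH)
    (phi : VH -> VG) (P : VH -> VH -> seq VG) : Prop :=
  [/\ injective phi,
      (forall u v, h u v ->
         [/\ path g (phi u) (rcons (P u v) (phi v)), uniq (P u v)
           & forall w, phi w \notin P u v])
    & (forall u v u' v', h u v -> h u' v' -> (u, v) != (u', v') ->
         forall x, x \in P u v -> x \notin P u' v')].

Definition tm_verts (VG VH : finType) (h : rel VH)
    (phi : VH -> VG) (P : VH -> VH -> seq VG) : {set VG} :=
  [set x | [exists w, phi w == x] || [exists p : VH * VH, h p.1 p.2 && (x \in P p.1 p.2)]].

Definition contains_tm (VG VH : finType) (g : rel VG) (h : rel VH) : Prop :=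
  exists (phi : VH -> VG) (P : VH -> VH -> seq VG), tm_copy g h phi P.

Definition contains_k_disjoint_tm (VG VH : finType) (g : rel VG) (h : rel VH)
    (k : nat) : Prop :=
  exists (phi : 'I_k -> VH -> VG) (P : 'I_k -> VH -> VH -> seq VG),
    (forall i, tm_copy g h (phi i) (P i)) /\
    (forall i j, i != j -> [disjoint tm_verts h (phi i) (P i) & tm_verts h (phi j) (P j)]).

Definition del_verts (V : finType) (g : rel V) (X : {set V}) : rel {x : V | x \notin X} :=
  fun x y => g (val x) (val y).

(* Interval decomposition: I(v) = [l v, r v] (integer intervals); if
   max I(u) < min I(v) then (u,v) is an arc. *)
Definition interval_decomp (V : finType) (a : rel V) (l r : V -> Z) : Prop :=
  (forall v, (l v <= r v)%Z) /\ (forall u v, (r u < l v)%Z -> a u v).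

Definition pw_le (V : finType) (a : rel V) (c : R) : Prop :=
  exists l r : V -> Z, interval_decomp a l r /\
    forall al : Z, Rle (INR #|[set v | (l v <=? al)%Z && (al <=? r v)%Z]|) c.

(* d is a valid choice of the constant d_pw *)
Definition is_dpw (d : R) : Prop :=
  forall (V W : finType) (t : rel V) (h : rel W),
    tournament t -> simple_digraph h -> ~ contains_tm t h ->
    pw_le t (Rmult d (INR (dg_size h))).

Definition log2 (x : R) : R := Rdiv (ln x) (ln 2).

From Stdlib Require Import Reals ZArith Lia Lra Classical.
From mathcomp Require Import all_boot zify.
Set Implicit Arguments. Unset Strict Implicit. Unset Printing Implicit Defensive.

(* Induction on k, counting copies of H inside a vertex set S.  If S holds no k
   disjoint copies of H, then T[S] does not contain the disjoint union of k copies
   of H as a topological minor, so T[S] has an interval decomposition of width at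
   most c k, where c = d_pw ||H||.  Cutting it at a point al leaves the bag at al,
   the vertices whose interval ends before al and those whose interval starts
   after al; no arc goes from the latter to the former, so a copy of the strongly
   connected H avoiding the bag lies on one side.  At the last al for which the
   left side has no ceil(k/2) disjoint copies, the right side has no floor(k/2)
   disjoint copies (else together with the left side at al + 1 they would give k),
   and hitting sets for both sides plus the bag have size at most
   f(ceil(k/2)) + f(floor(k/2)) + c k <= f(k), where f(k) = 2 c k log k. *)

Lemma tm_vertsP (V W : finType) (h : rel W) (phi : W -> V) (P : W -> W -> seq V) x :
  reflect ((exists w, phi w = x) \/ (exists u v, h u v /\ x \in P u v))
          (x \in tm_verts h phi P).
Proof.
rewrite inE; apply: (iffP orP) => [[/existsP [w /eqP <-] | /existsP [p /andP [hp xp]]] |].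
- by left; exists w.
- by right; exists p.1, p.2.
case=> [[w <-] | [u [v [huv xp]]]]; [left | right]; apply/existsP.
- by exists w.
- by exists (u, v); rewrite /= huv.
Qed.

Section MapCopies.

Variables (U V W : finType) (g : rel U) (t : rel V) (h : rel W) (f : U -> V).
Hypotheses (f_inj : injective f) (f_homo : {homo f : x y / g x y >-> t x y}).

Lemma tm_copy_map phi P :
  tm_copy g h phi P -> tm_copy t h (f \o phi) (fun u v => map f (P u v)).
Proof.
case=> phi_inj cP dP; split=> [|u v huv|u v u' v' huv hu'v' ne x].
- exact: inj_comp.
- have [pP uP bP] := cP u v huv; split=> [||w].
  + by rewrite /= -map_rcons; exact: homo_path pP.
  + by rewrite map_inj_uniq.
  + by rewrite /= mem_map.
- by case/mapP=> y yP ->; rewrite mem_map // (dP u v u' v').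
Qed.

Lemma tm_verts_map phi P :
  tm_verts h (f \o phi) (fun u v => map f (P u v)) = f @: tm_verts h phi P.
Proof.
apply/setP=> x; apply/tm_vertsP/imsetP => [[[w <-] | [u [v [huv /mapP [y yP ->]]]]] |].
- by exists (phi w) => //; apply/tm_vertsP; left; exists w.
- by exists y => //; apply/tm_vertsP; right; exists u, v.
case=> y /tm_vertsP [[w <-] | [u [v [huv yP]]]] ->.
- by left; exists w.
- by right; exists u, v; rewrite map_f.
Qed.

End MapCopies.

Section PatternMap.

Variables (V W W' : finType) (t : rel V) (h : rel W) (h' : rel W') (e : W -> W').
Hypothesis e_homo : {homo e : u v / h u v >-> h' u v}.

Lemma tm_copy_sub (phi : W' -> V) (P : W' -> W' -> seq V) :
  injective e -> tm_copy t h' phi P ->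
  tm_copy t h (phi \o e) (fun u v => P (e u) (e v)).
Proof.
move=> e_inj [phi_inj cP dP]; split=> [|u v huv|u v u' v' huv hu'v' ne].
- exact: inj_comp.
- by have [pP uP bP] := cP _ _ (e_homo huv); split=> // w; apply: bP.
- apply: dP; rewrite ?e_homo //.
  apply: contra ne; rewrite !xpair_eqE => /andP [/eqP /e_inj -> /eqP /e_inj ->].
  by rewrite !eqxx.
Qed.

Lemma tm_verts_sub (phi : W' -> V) (P : W' -> W' -> seq V) :
  tm_verts h (phi \o e) (fun u v => P (e u) (e v)) \subset tm_verts h' phi P.
Proof.
apply/subsetP => x /tm_vertsP [[w <-] | [u [v [huv xP]]]]; apply/tm_vertsP.
- by left; exists (e w).
- by right; exists (e u), (e v); rewrite e_homo.
Qed.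

End PatternMap.

Section CopiesInSet.

Variables (V W : finType) (t : rel V) (h : rel W).

Definition tm_in (S : {set V}) : Prop :=
  exists phi P, tm_copy t h phi P /\ tm_verts h phi P \subset S.

Definition disjoint_tms_in (S : {set V}) (k : nat) : Prop :=
  exists (phi : 'I_k -> W -> V) (P : 'I_k -> W -> W -> seq V),
    (forall i, tm_copy t h (phi i) (P i) /\ tm_verts h (phi i) (P i) \subset S) /\
    (forall i j, i != j -> [disjoint tm_verts h (phi i) (P i) & tm_verts h (phi j) (P j)]).

Lemma disjoint_tms_inT k : disjoint_tms_in setT k -> contains_k_disjoint_tm t h k.
Proof. by case=> [phi [P [cP dP]]]; exists phi, P; split=> // i; case: (cP i). Qed.

Lemma disjoint_tms_inS (A B : {set V}) k :
  A \subset B -> disjoint_tms_in A k -> disjoint_tms_in B k.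
Proof.
move=> sAB [phi [P [cP dP]]]; exists phi, P; split=> // i.
by have [ci si] := cP i; split; last exact: subset_trans sAB.
Qed.

Lemma disjoint_tms_in1 (A : {set V}) : tm_in A -> disjoint_tms_in A 1.
Proof.
case=> [phi [P cP]]; exists (fun=> phi), (fun=> P); split=> // i j.
by rewrite !ord1 eqxx.
Qed.

Lemma disjoint_tms_in_void (A : {set V}) k : (W -> False) -> disjoint_tms_in A k.
Proof.
move=> W0; exists (fun _ w => False_rect V (W0 w)), (fun _ _ _ => [::]).
have no_verts (phi : W -> V) (P : W -> W -> seq V) : tm_verts h phi P = set0.
  by apply/setP=> x; rewrite in_set0; apply/negbTE/negP => /tm_vertsP [[w _] | [u _]];
    [case: (W0 w) | case: (W0 u)].
split=> [i | i j _]; last by rewrite no_verts -setI_eq0 set0I.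
rewrite no_verts sub0set; split=> //.
by split=> [w | u | u]; case: (W0 w) || case: (W0 u).
Qed.

Lemma disjoint_tms_in0 (w0 : W) k : (0 < k)%N -> ~ disjoint_tms_in set0 k.
Proof.
move=> k0 [phi [P [cP _]]]; have [_ /subsetP sP] := cP (Ordinal k0).
suff: phi (Ordinal k0) w0 \in set0 by rewrite in_set0.
by apply: sP; apply/tm_vertsP; left; exists w0.
Qed.

Lemma disjoint_tms_inU (A B : {set V}) a b :
  [disjoint A & B] -> disjoint_tms_in A a -> disjoint_tms_in B b ->
  disjoint_tms_in (A :|: B) (a + b).
Proof.
move=> dAB [phA [PA [cA dA]]] [phB [PB [cB dB]]].
exists (fun i => match split i with inl j => phA j | inr j => phB j end).
exists (fun i => match split i with inl j => PA j | inr j => PB j end).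
split=> [i | i j ne].
  case: (split i) => j; [have [cj sj] := cA j | have [cj sj] := cB j];
    by split=> //; apply: subset_trans sj _; rewrite ?subsetUl ?subsetUr.
have disj_sides i1 j1 : [disjoint tm_verts h (phA i1) (PA i1) & tm_verts h (phB j1) (PB j1)].
  by have [_ s1] := cA i1; have [_ s2] := cB j1; exact: disjointWl s1 (disjointWr s2 dAB).
move: ne; have := splitK i; have := splitK j.
case: (split j) => j1 <-; case: (split i) => i1 <- ne.
- by apply: dA; apply: contra ne => /eqP ->.
- by rewrite disjoint_sym.
- exact: disj_sides.
- by apply: dB; apply: contra ne => /eqP ->.
Qed.

End CopiesInSet.

Lemma tm_in_val (V W : finType) (t : rel V) (h : rel W) (A : pred V) (S : {set V})
    (g : rel {x | A x}) :
  (forall x, A x -> x \in S) -> {homo val : x y / g x y >-> t x y} ->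
  contains_tm g h -> tm_in t h S.
Proof.
move=> AS val_homo [phi [P cP]]; exists (val \o phi), (fun u v => map val (P u v)).
split; first exact: tm_copy_map val_inj val_homo _ _ cP.
by rewrite tm_verts_map; apply/subsetP=> _ /imsetP [y _ ->]; apply/AS/valP.
Qed.

Definition ncopies (W : finType) (h : rel W) (k : nat) : rel ('I_k * W) :=
  fun p q => (p.1 == q.1) && h p.2 q.2.
Arguments ncopies {W} h k.

Lemma ncopies_simple (W : finType) (h : rel W) (k : nat) :
  simple_digraph h -> simple_digraph (ncopies h k).
Proof. by move=> h_irr p; rewrite /ncopies eqxx h_irr. Qed.

Lemma dg_size_ncopies (W : finType) (h : rel W) (k : nat) :
  dg_size (ncopies h k) = k * dg_size h.
Proof.
rewrite /dg_size mulnDr card_prod card_ord; congr (_ + _).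
pose f (q : 'I_k * (W * W)) := ((q.1, q.2.1), (q.1, q.2.2)).
have -> : [set p | ncopies h k p.1 p.2] = f @: setX setT [set p : W * W | h p.1 p.2].
  apply/setP => [[[i u] [j v]]]; rewrite inE /ncopies /=; apply/idP/imsetP.
  - by case/andP => /eqP <- huv; exists (i, (u, v)); rewrite ?inE.
  - by case=> [[i' [u' v']]]; rewrite !inE /= => huv [-> -> -> ->]; rewrite eqxx.
rewrite card_imset ?cardsX ?cardsT ?card_ord //.
by move=> [i1 [u1 v1]] [i2 [u2 v2]] [-> -> _ ->].
Qed.

Lemma tm_in_ncopies (V W : finType) (t : rel V) (h : rel W) (S : {set V}) k :
  tm_in t (ncopies h k) S -> disjoint_tms_in t h S k.
Proof.
case=> phi [P [cP sP]].
have homo i : {homo pair i : u v / h u v >-> ncopies h k u v}.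
  by move=> u v huv; rewrite /ncopies eqxx.
have pair_inj i : injective (pair i : W -> 'I_k * W) by move=> u v [].
exists (fun i => phi \o pair i), (fun i u v => P (i, u) (i, v)); split=> [i | i j ne].
  split; first exact: (tm_copy_sub (homo i) (pair_inj i) cP).
  exact: subset_trans (tm_verts_sub (homo i) _ _) sP.
have [phi_inj cP' dP] := cP.
have not_branch i' u v w : h u v -> phi w \notin P (i', u) (i', v).
  by move=> huv; have [_ _] := cP' _ _ (homo i' u v huv); apply.
rewrite disjoint_subset; apply/subsetP => x /tm_vertsP xi; apply/negP => /tm_vertsP xj.
case: xi xj => [[w <-] | [u [v [huv xP]]]] [[w' ew] | [u' [v' [hu'v' xP']]]] /=.
- by move/phi_inj: ew => [] /eqP; rewrite eq_sym (negbTE ne).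
- by rewrite (negbTE (not_branch _ _ _ _ hu'v')) in xP'.
- by rewrite -ew (negbTE (not_branch _ _ _ _ huv)) in xP.
- move: xP'; apply/negP; apply: dP xP; rewrite ?homo //.
  by apply: contra ne => /eqP [->].
Qed.

Section OneSide.

Variables (V : finType) (t : rel V) (L R : {set V}).
Hypothesis no_back : {in R & L, forall x y, ~~ t x y}.

Lemma path_stays_right x s :
  path t x s -> x \in R -> all (mem (L :|: R)) s -> all (mem R) s.
Proof.
elim: s x => //= y s IH x /andP [txy ps] xR /andP [yLR sLR].
have yR : y \in R.
  move: yLR; rewrite inE => /orP [yL | //].
  by move: (no_back xR yL); rewrite txy.
by rewrite yR (IH y).
Qed.

Lemma path_last_right x s : path t x s ->
  all (mem (L :|: R)) (x :: s) -> has (mem R) (x :: s) -> last x s \in R.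
Proof.
elim: s x => [|y s IH] x /=; first by rewrite orbF => _ _.
move=> /andP [txy ps] /andP [xLR sLR] /orP [xR | sR]; last exact: IH.
have /andP [yR /allP sR] : all (mem R) (y :: s).
  by apply: (path_stays_right (x := x)) => //=; rewrite txy.
by have := mem_last y s; rewrite inE => /orP [/eqP -> | /sR].
Qed.

Lemma tm_verts_one_side (W : finType) (h : rel W) phi P :
  strongly_connected h -> tm_copy t h phi P -> tm_verts h phi P \subset L :|: R ->
  tm_verts h phi P \subset L \/ tm_verts h phi P \subset R.
Proof.
move=> hsc [_ cP _] sLR.
have in_LR u v : h u v -> all (mem (L :|: R)) (rcons (P u v) (phi v)).
  move=> huv; apply/allP => z; rewrite mem_rcons inE => /orP [/eqP -> | zP];
    apply: (subsetP sLR); apply/tm_vertsP; [left; exists v | right; exists u, v] => //.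
have arc_right u v : h u v -> phi u \in R -> all (mem R) (rcons (P u v) (phi v)).
  by move=> huv uR; have [pP _ _] := cP u v huv; exact: path_stays_right pP uR (in_LR u v huv).
(* One branch vertex in R drags the whole copy into R along the arcs of h; with
   none, a path vertex in R would drag the endpoint of its path into R. *)
have [[w0 w0R] | noR] := classic (exists w0, phi w0 \in R).
  have branch_right w : phi w \in R.
    have /connectP [p hp ->] := hsc w0 w.
    elim: p w0 w0R hp => //= v p IH u uR /andP [huv hp].
    by apply: IH hp; have := arc_right u v huv uR; rewrite all_rcons => /andP [].
  right; apply/subsetP => x /tm_vertsP [[w <-] // | [u [v [huv xP]]]].
  by have /allP := arc_right u v huv (branch_right u); apply; rewrite mem_rcons inE xP orbT.
left; apply/subsetP => x xH; have := subsetP sLR x xH; rewrite inE => /orP [// | xR].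
exfalso; apply: noR; case/tm_vertsP: xH => [[w ew] | [u [v [huv xP]]]].
  by exists w; rewrite ew.
exists v; have [pP _ _] := cP u v huv; rewrite -(last_rcons (phi u) (P u v) (phi v)).
apply: path_last_right pP _ _.
  by rewrite /= in_LR // andbT; apply: (subsetP sLR); apply/tm_vertsP; left; exists u.
by apply/hasP; exists x; rewrite // inE mem_rcons inE xP !orbT.
Qed.

End OneSide.

Lemma exists_boundary (Q : Z -> Prop) (lo : Z) (n : nat) :
  Q lo -> exists al, Q al /\ (al = lo + Z.of_nat n \/ ~ Q (al + 1))%Z.
Proof.
elim: n lo => [|n IH] lo Qlo; first by exists lo; split=> //; left; lia.
have [Qlo1 | nQlo1] := classic (Q (lo + 1)%Z); last by exists lo; split=> //; right.
have [al [Qal end_al]] := IH _ Qlo1; exists al; split=> //.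
by case: end_al => [-> | ?]; [left; lia | right].
Qed.

Definition interval_decomp_on (V : finType) (t : rel V) (S : {set V}) (l r : V -> Z) :=
  {in S, forall x, (l x <= r x)%Z} /\ {in S &, forall x y, (r x < l y)%Z -> t x y}.

Definition bag (V : finType) (S : {set V}) (l r : V -> Z) (al : Z) : {set V} :=
  [set x in S | (l x <=? al)%Z && (al <=? r x)%Z].

Definition ends_before (V : finType) (S : {set V}) (r : V -> Z) (al : Z) : {set V} :=
  [set x in S | (r x <? al)%Z].

Definition starts_after (V : finType) (S : {set V}) (l : V -> Z) (al : Z) : {set V} :=
  [set x in S | (al <? l x)%Z].

Section IntervalCut.

Variables (V : finType) (S : {set V}) (l r : V -> Z).

Lemma setD_bag al : S :\: bag S l r al \subset ends_before S r al :|: starts_after S l al.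
Proof.
apply/subsetP => x; rewrite !inE => /andP [+ xS]; rewrite xS /=.
by case: Z.leb_spec0; case: Z.leb_spec0; case: Z.ltb_spec0; case: Z.ltb_spec0 => //=; lia.
Qed.

Lemma ends_before_starts_after_sub al al' :
  ends_before S r al :|: starts_after S l al' \subset S.
Proof. by apply/subsetP => x; rewrite !inE => /orP [] /andP []. Qed.

Lemma interval_bounds :
  exists M : nat, ends_before S r (- Z.of_nat M) = set0 /\ starts_after S l (Z.of_nat M) = set0.
Proof.
pose M := \max_(x in S) (Z.abs_nat (l x) + Z.abs_nat (r x)).
have bounded x : x \in S -> (Z.abs_nat (l x) + Z.abs_nat (r x) <= M)%N.
  exact: (leq_bigmax_cond (F := fun x => Z.abs_nat (l x) + Z.abs_nat (r x))).
exists M; split; apply/setP => x; rewrite !inE; apply/negbTE/andP => -[/bounded xM];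
  rewrite ?Z.ltb_lt; lia.
Qed.

Variable t : rel V.
Hypotheses (t_tour : tournament t) (decomp : interval_decomp_on t S l r).

Lemma disjoint_ends_before_starts_after al :
  [disjoint ends_before S r (al + 1) & starts_after S l al].
Proof.
have [lr _] := decomp.
rewrite disjoint_subset; apply/subsetP => x; rewrite !inE => /andP [xS /Z.ltb_lt xal].
by apply/negP => /andP [_ /Z.ltb_lt alx]; have := lr x xS; lia.
Qed.

Lemma no_arc_starts_after_ends_before al :
  {in starts_after S l al & ends_before S r al, forall x y, ~~ t x y}.
Proof.
have [lr arcs] := decomp; have [t_irr t_asym] := t_tour.
move=> x y; rewrite !inE => /andP [xS /Z.ltb_lt alx] /andP [yS /Z.ltb_lt yal].
have yx : y != x by apply/eqP => yx; move: yal; rewrite yx; have := lr x xS; lia.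
by rewrite -(t_asym _ _ yx) arcs //; lia.
Qed.

Variables (W : finType) (h : rel W).

Lemma exists_balanced_cut (w0 : W) a b :
  (0 < a)%N -> (0 < b)%N -> ~ disjoint_tms_in t h S (a + b) ->
  exists al, ~ disjoint_tms_in t h (ends_before S r al) a /\
             ~ disjoint_tms_in t h (starts_after S l al) b.
Proof.
move=> a0 b0 no_ab; have [M [before0 after0]] := interval_bounds.
have [|al [no_a cut]] := exists_boundary (2 * M)
  (Q := fun al => ~ disjoint_tms_in t h (ends_before S r al) a) (lo := (- Z.of_nat M)%Z).
  by rewrite /= before0; exact: (disjoint_tms_in0 (t := t) w0 a0).
exists al; split=> // has_b; case: cut => [alM | /NNPP has_a].
  have alM' : al = Z.of_nat M by lia.
  by move: has_b; rewrite alM' after0; exact: (disjoint_tms_in0 (t := t) w0 b0).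
apply/no_ab/(disjoint_tms_inS (ends_before_starts_after_sub _ _)).
exact: disjoint_tms_inU (disjoint_ends_before_starts_after al) has_a has_b.
Qed.

Lemma no_tm_in_cut al (X1 X2 : {set V}) : strongly_connected h ->
  ~ tm_in t h (ends_before S r al :\: X1) -> ~ tm_in t h (starts_after S l al :\: X2) ->
  ~ tm_in t h (S :\: (X1 :|: X2 :|: bag S l r al)).
Proof.
move=> hsc no_left no_right [phi [P [cP]]].
rewrite subsetD => /andP [sS dX].
have sLR : tm_verts h phi P \subset ends_before S r al :|: starts_after S l al.
  apply: subset_trans (setD_bag al); rewrite subsetD sS /=.
  by apply: disjointWr dX; rewrite subsetUr.
have [sL | sR] := tm_verts_one_side (@no_arc_starts_after_ends_before al) hsc cP sLR.
  apply: no_left; exists phi, P; split=> //; rewrite subsetD sL /=.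
  by apply: disjointWr dX; rewrite -setUA subsetUl.
apply: no_right; exists phi, P; split=> //; rewrite subsetD sR /=.
by apply: disjointWr dX; apply/subsetP => x xX2; rewrite !inE xX2 orbT.
Qed.

End IntervalCut.

Definition induced (V : finType) (t : rel V) (S : {set V}) : rel {x | x \in S} :=
  fun x y => t (val x) (val y).
Arguments induced {V} t S.

Lemma induced_tournament (V : finType) (t : rel V) (S : {set V}) :
  tournament t -> tournament (induced t S).
Proof.
case=> t_irr t_asym; split=> [x | x y xy]; first exact: t_irr.
by apply: t_asym; apply: contra xy => /eqP /val_inj ->.
Qed.

Lemma induced_interval_decomp (V : finType) (t : rel V) (S : {set V}) (c : R) :
  pw_le (induced t S) c ->
  exists l r, interval_decomp_on t S l r /\ forall al, Rle (INR #|bag S l r al|) c.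
Proof.
case=> l [r [[lr arcs] width]].
pose ext (f : {x | x \in S} -> Z) x := if insub x is Some u then f u else 0%Z.
have extE f x (xS : x \in S) : ext f x = f (Sub x xS) by rewrite /ext insubT.
exists (ext l), (ext r); split.
  split=> [x xS | x y xS yS]; rewrite !extE; first exact: lr.
  by move/arcs; rewrite /induced !SubK.
move=> al; apply: Rle_trans (width al); apply/le_INR/leP.
rewrite -(card_imset _ val_inj); apply/subset_leq_card/subsetP => x.
rewrite inE => /andP [xS]; rewrite !extE => x_al.
by apply/imsetP; exists (Sub x xS); rewrite ?inE ?SubK.
Qed.

Section LogBound.

Local Open Scope R_scope.

Lemma ln_le x y : 0 < x -> x <= y -> ln x <= ln y.
Proof.
move=> x0 /Rle_lt_or_eq_dec [xy | <-]; last exact: Rle_refl.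
exact/Rlt_le/ln_increasing.
Qed.

Lemma log2_split a b : 1 <= b -> b <= a -> 2 * (a * a) <= (a + b) * (a + b) ->
  2 * a * log2 a + 2 * b * log2 b + (a + b) <= 2 * (a + b) * log2 (a + b).
Proof.
move=> b1 ba sq.
have ln2 : 0 < ln 2 by have := ln_lt_2; lra.
have lnb0 : 0 <= ln b by rewrite -ln_1; apply: ln_le; lra.
have lnba : ln b <= ln a by apply: ln_le; lra.
have ln_sq : ln 2 + 2 * ln a <= 2 * ln (a + b).
  have -> : ln 2 + 2 * ln a = ln (2 * (a * a)) by rewrite !ln_mult; nra.
  have -> : 2 * ln (a + b) = ln ((a + b) * (a + b)) by rewrite ln_mult; lra.
  by apply: ln_le; nra.
have b_lnb : b * ln b <= b * ln a by apply: Rmult_le_compat_l; lra.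
have ab_ln : (a + b) * (ln 2 + 2 * ln a) <= (a + b) * (2 * ln (a + b)).
  by apply: Rmult_le_compat_l; lra.
apply: (Rmult_le_reg_r (ln 2)) => //; rewrite /log2.
have -> : (2 * a * (ln a / ln 2) + 2 * b * (ln b / ln 2) + (a + b)) * ln 2
  = 2 * a * ln a + 2 * b * ln b + (a + b) * ln 2 by field; lra.
have -> : 2 * (a + b) * (ln (a + b) / ln 2) * ln 2 = 2 * (a + b) * ln (a + b) by field; lra.
lra.
Qed.

Definition hitting_bound (c : R) (k : nat) : R := 2 * c * INR k * log2 (INR k).

Lemma hitting_bound1 c : hitting_bound c 1 = 0.
Proof. by rewrite /hitting_bound /log2 /= ln_1 /Rdiv Rmult_0_l Rmult_0_r. Qed.

Lemma hitting_bound_split c k : 0 <= c -> (2 <= k)%N ->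
  hitting_bound c (k - k./2) + hitting_bound c k./2 + c * INR k <= hitting_bound c k.
Proof.
move=> c0 k2; rewrite /hitting_bound.
have -> : INR k = INR (k - k./2) + INR k./2 by rewrite -plus_INR; congr INR; lia.
have := @log2_split (INR (k - k./2)) (INR k./2).
set a := INR (k - k./2); set b := INR k./2 => split_ab.
have b1 : 1 <= b by apply: (le_INR 1); lia.
have ba : b <= a by apply: le_INR; lia.
have sq : 2 * (a * a) <= (a + b) * (a + b).
  rewrite -!plus_INR -!mult_INR -[2]/(INR 2) -mult_INR; apply: le_INR; nia.
have := Rmult_le_compat_l c _ _ c0 (split_ab b1 ba sq); lra.
Qed.

End LogBound.

Section HittingSet.

Local Open Scope R_scope.

Variables (d : R) (V W : finType) (t : rel V) (h : rel W).
Hypotheses (hd : is_dpw d) (h_simple : simple_digraph h) (hsc : strongly_connected h)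
  (t_tour : tournament t).

Let c := d * INR (dg_size h).

Lemma narrow_interval_decomp S k : ~ disjoint_tms_in t h S k ->
  exists l r, interval_decomp_on t S l r /\ forall al, INR #|bag S l r al| <= c * INR k.
Proof.
move=> no_k; apply: induced_interval_decomp.
have := hd (induced_tournament S t_tour) (ncopies_simple (k := k) h_simple).
rewrite dg_size_ncopies mult_INR /c.
have -> : d * (INR k * INR (dg_size h)) = d * INR (dg_size h) * INR k by ring.
apply=> has_k; apply/no_k/tm_in_ncopies.
exact: tm_in_val (fun x xS => xS) (fun x y txy => txy) has_k.
Qed.

Lemma hitting_set_in k : (0 < k)%N -> forall S, ~ disjoint_tms_in t h S k ->
  exists X : {set V}, INR #|X| <= hitting_bound c k /\ ~ tm_in t h (S :\: X).
Proof.
elim/ltn_ind: k => k IH k0 S no_k.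
case: (pickP (@predT W)) => [w0 _ | W0]; last first.
  by case: no_k; apply: disjoint_tms_in_void => w; have := W0 w.
have [k1 | k2] := leqP k 1.
  have k_1 : k = 1%N by lia.
  exists set0; rewrite cards0 k_1 hitting_bound1 setD0; split; first exact: Rle_refl.
  by move/disjoint_tms_in1; rewrite -k_1.
have [l [r [decomp width]]] := narrow_interval_decomp no_k.
have c0 : 0 <= c.
  have := width 0%Z; have := pos_INR #|bag S l r 0|; have := lt_0_INR k (elimT ltP k0).
  nra.
have a0 : (0 < k - k./2)%N by lia.
have b0 : (0 < k./2)%N by lia.
have halves : (k - k./2 + k./2 = k)%N by lia.
rewrite -halves in no_k.
have [al [no_a no_b]] := exists_balanced_cut decomp w0 a0 b0 no_k.
have [X1 [X1_le no1]] := IH (k - k./2)%N ltac:(lia) a0 _ no_a.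
have [X2 [X2_le no2]] := IH k./2 ltac:(lia) b0 _ no_b.
exists (X1 :|: X2 :|: bag S l r al); split; last exact: no_tm_in_cut.
apply: Rle_trans (hitting_bound_split c0 k2); have := width al.
have card_le : (#|X1 :|: X2 :|: bag S l r al| <= #|X1| + #|X2| + #|bag S l r al|)%N.
  by rewrite !cardsU; lia.
have := le_INR _ _ (elimT leP card_le); rewrite !plus_INR; lra.
Qed.

End HittingSet.

Theorem lemma21 (d : R) (hd : is_dpw d)
  (W : finType) (h : rel W) (V : finType) (t : rel V) (k : nat) :
  simple_digraph h -> strongly_connected h -> (0 < k)%N ->
  tournament t -> ~ contains_k_disjoint_tm t h k ->
  exists X : {set V},
    Rle (INR #|X|)
      (Rmult (Rmult (Rmult (Rmult (INR 2) d) (INR (dg_size h))) (INR k)) (log2 (INR k))) /\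
    ~ contains_tm (@del_verts V t X) h.
Proof.
move=> h_simple hsc k0 t_tour no_k.
have [|X [X_le no_tm]] := hitting_set_in hd h_simple hsc t_tour k0 (S := setT).
  by move/disjoint_tms_inT.
exists X; split.
  by move: X_le; rewrite /hitting_bound -!Rmult_assoc.
move=> has_tm; apply: no_tm; rewrite setTD.
by apply: tm_in_val _ (fun x y txy => txy) has_tm => x; rewrite inE.
Qed.
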